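(* Let $G=(V,E)$ be an undirected graph (finite or infinite) with $|V|>2$. If $G$ is decomposable and has a color class $\widehat A$ with $\widetilde A=V$, then $G$ has a non-trivial maximal ``strong'' partitive set, i.e. a ``strong'' partitive set $X$ with $|X|\ge2$ and $X\neq V$ which is maximal for inclusion among the ``strong'' partitive sets of $G$ different from $V$.
   Context: A graph $G=(V,E)$ has vertex set $V$ and edge set $E\subseteq V^2$; it is undirected if $E$ is irreflexive and symmetric. A set $X\subseteq V$ is a partitive set of $G$ if for all $a,b\in X$ and $c\in V\setminus X$: $(a,c)\in E\Leftrightarrow(b,c)\in E$ and $(c,a)\in E\Leftrightarrow(c,b)\in E$; $I(G)$ is the class of partitive sets; a partitive set is trivial if it is a singleton or $V$. $G$ is indecomposable if all its partitive sets are trivial, decomposable otherwise. A ``strong'' partitive set is an $X\in I(G)$ such that for every $Y\in I(G)$ with $X\cap Y\neq\emptyset$, $X\subseteq Y$ or $Y\subseteq X$. Implication classes: on $E$ define $(a,b)\Gamma(a',b')$ iff either $a=a'$ and $(b,b')\notin E$, or $b=b'$ and $(a,a')\notin E$; the classes of the transitive closure $\Gamma^*$ are the implication classes. For an implication class $A$, $A^{-1}=\{(b,a):(a,b)\in A\}$ and the color class is $\widehat A=A\cup A^{-1}$; $\widetilde A$ is the set of vertices spanned by $\widehat A$. *)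

From Stdlib Require Import Relations.

Section Graphs.
Variable V : Type.
Variable E : V -> V -> Prop.

Definition undirected : Prop :=
  (forall x, ~ E x x) /\ (forall x y, E x y -> E y x).

Definition partitive (X : V -> Prop) : Prop :=
  forall a b c, X a -> X b -> ~ X c ->
    (E a c <-> E b c) /\ (E c a <-> E c b).

Definition trivial_set (X : V -> Prop) : Prop :=
  (forall x, ~ X x) \/ (exists x, forall y, X y <-> y = x) \/ (forall x, X x).

Definition decomposable : Prop :=
  exists X, partitive X /\ ~ trivial_set X.

Definition strong_partitive (X : V -> Prop) : Prop :=
  partitive X /\
  forall Y, partitive Y -> (exists x, X x /\ Y x) ->
    (forall x, X x -> Y x) \/ (forall x, Y x -> X x).

Definition Gamma (p q : V * V) : Prop :=
  E (fst p) (snd p) /\ E (fst q) (snd q) /\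
  ((fst p = fst q /\ ~ E (snd p) (snd q)) \/
   (snd p = snd q /\ ~ E (fst p) (fst q))).

Definition impl_class (e : V * V) (p : V * V) : Prop :=
  clos_refl_trans (V * V) Gamma e p.

(* the colour class  A ∪ A^{-1}  of the implication class A of e *)
Definition color_class (e : V * V) (p : V * V) : Prop :=
  impl_class e p \/ impl_class e (snd p, fst p).

Definition spanned (e : V * V) (x : V) : Prop :=
  exists y, color_class e (x, y) \/ color_class e (y, x).

End Graphs.

Arguments undirected {V} E.
Arguments partitive {V} E X.
Arguments trivial_set {V} X.
Arguments decomposable {V} E.
Arguments strong_partitive {V} E X.
Arguments Gamma {V} E p q.
Arguments impl_class {V} E e p.
Arguments color_class {V} E e p.
Arguments spanned {V} E e x.

From Stdlib Require Import Relations Classical.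

(* Let Â be the colour class spanning V. If a module M contains both ends of
   an edge of Â, then M = V: "both ends lie in M" is invariant under Γ, so it
   holds for every edge of Â, and these edges cover V.
   Pick x in a non-trivial module M and y with (x, y) in Â; then y ∉ M, and
   the union P of all modules containing x but not y is the largest such
   module. P is strong: a module Y meeting P either avoids y, and then
   P ∪ Y ⊆ P; or contains x and y, and then Y = V; or contains y but not x,
   and then P ∪ Y = V makes both P \ Y and V \ P completely joined to their
   complements, so Γ-invariance puts every vertex in one of them, which
   contradicts P ∩ Y ≠ ∅. P is maximal since a proper module containing P
   contains x, hence avoids y, hence lies in P. *)

Section Invariants.

Variables (V : Type) (E : V -> V -> Prop).
Hypothesis E_undirected : undirected E.

Lemma Gamma_sym p q : Gamma E p q -> Gamma E q p.
Proof.
  destruct E_undirected as [_ E_sym].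
  intros (Ep & Eq & [[Hfst Hn] | [Hsnd Hn]]); repeat split; auto.
  - left; split; auto.
  - right; split; auto.
Qed.

Section Gamma_invariant.

Variable I : V * V -> Prop.
Hypothesis I_Gamma : forall p q, Gamma E p q -> I p -> I q.
Hypothesis I_swap : forall a b, I (a, b) -> I (b, a).

Lemma impl_class_invariant e p : impl_class E e p -> (I e <-> I p).
Proof.
  unfold impl_class; induction 1 as [p q Hpq | p | p q r _ IHpq _ IHqr].
  - split; apply I_Gamma; [exact Hpq | exact (Gamma_sym p q Hpq)].
  - reflexivity.
  - now rewrite IHpq.
Qed.

Lemma color_class_invariant e a b : color_class E e (a, b) -> (I e <-> I (a, b)).
Proof.
  assert (I_swap_iff : I (b, a) <-> I (a, b)) by (split; apply I_swap).
  intros [H | H]; apply impl_class_invariant in H; simpl in H.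
  - exact H.
  - now rewrite <- I_swap_iff.
Qed.

Lemma invariant_at_every_vertex e a b :
  (forall v, spanned E e v) -> color_class E e (a, b) -> I (a, b) ->
  forall v, exists w, I (v, w).
Proof.
  intros e_spans Hab Iab v.
  apply color_class_invariant in Hab; apply Hab in Iab.
  destruct (e_spans v) as [w [H | H]]; exists w; apply color_class_invariant in H.
  - now apply H.
  - now apply I_swap, H.
Qed.

End Gamma_invariant.

Lemma color_class_edge e a b :
  E (fst e) (snd e) -> color_class E e (a, b) -> E a b.
Proof.
  intros e_edge Hab.
  apply (color_class_invariant (fun p => E (fst p) (snd p))) in Hab.
  - now apply Hab.
  - now intros p q (_ & Eq & _).
  - apply E_undirected.
Qed.

Lemma spanned_color_class e x : spanned E e x -> exists y, color_class E e (x, y).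
Proof.
  intros [y [H | [H | H]]]; exists y.
  - exact H.
  - right; exact H.
  - left; exact H.
Qed.

Lemma partitive_Gamma_closed M p q :
  partitive E M -> Gamma E p q -> M (fst p) /\ M (snd p) -> M (fst q) /\ M (snd q).
Proof.
  destruct p as [a b], q as [c d]; unfold Gamma; simpl.
  intros HM (Eab & Ecd & [[<- Hbd] | [<- Hac]]) [Ma Mb]; split; trivial;
    apply NNPP; intro Hout.
  - apply Hbd, (HM a b d Ma Mb Hout), Ecd.
  - apply Hac, E_undirected, (HM a b c Ma Mb Hout), Ecd.
Qed.

Definition joined_to_complement (S : V -> Prop) : Prop :=
  forall a b, S a -> ~ S b -> E a b.

Lemma joined_non_neighbour S a b : joined_to_complement S -> S a -> ~ E a b -> S b.
Proof. intros HS Sa Hab; apply NNPP; intro Sb; exact (Hab (HS a b Sa Sb)). Qed.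

Lemma joined_cross_Gamma_closed S T p q :
  joined_to_complement S -> joined_to_complement T -> Gamma E p q ->
  (S (fst p) /\ T (snd p)) \/ (T (fst p) /\ S (snd p)) ->
  (S (fst q) /\ T (snd q)) \/ (T (fst q) /\ S (snd q)).
Proof.
  destruct p as [a b], q as [c d]; unfold Gamma; simpl.
  intros HS HT (_ & _ & [[<- Hbd] | [<- Hac]]) [[Sa Tb] | [Ta Sb]].
  - left; split; [exact Sa | exact (joined_non_neighbour T b d HT Tb Hbd)].
  - right; split; [exact Ta | exact (joined_non_neighbour S b d HS Sb Hbd)].
  - left; split; [exact (joined_non_neighbour S a c HS Sa Hac) | exact Tb].
  - right; split; [exact (joined_non_neighbour T a c HT Ta Hac) | exact Sb].
Qed.

End Invariants.

Arguments joined_to_complement {V} E S.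

Section Modules.

Variables (V : Type) (E : V -> V -> Prop).

Lemma nontrivial_set_witnesses (M : V -> Prop) :
  ~ trivial_set M -> (exists x x', x <> x' /\ M x /\ M x') /\ (exists v, ~ M v).
Proof.
  intros M_nontrivial; split.
  - apply NNPP; intro no_pair.
    destruct (classic (exists x, M x)) as [[x Mx] | no_point].
    + apply M_nontrivial; right; left; exists x; intro y; split.
      * intro My; apply NNPP; intro Hyx; apply no_pair; exists x, y; auto.
      * now intros ->.
    + apply M_nontrivial; left; intros x Mx; apply no_point; exists x; exact Mx.
  - apply NNPP; intro no_out.
    apply M_nontrivial; right; right; intro x.
    apply NNPP; intro Mx; apply no_out; exists x; exact Mx.
Qed.

Lemma partitive_union P Y :
  partitive E P -> partitive E Y -> (exists z, P z /\ Y z) ->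
  partitive E (fun v => P v \/ Y v).
Proof.
  intros HP HY [z [Pz Yz]] a b c Ha Hb Hc.
  assert (Pc : ~ P c) by tauto.
  assert (Yc : ~ Y c) by tauto.
  destruct Ha as [Pa | Ya], Hb as [Pb | Yb].
  - exact (HP a b c Pa Pb Pc).
  - destruct (HP a z c Pa Pz Pc), (HY z b c Yz Yb Yc); tauto.
  - destruct (HY a z c Ya Yz Yc), (HP z b c Pz Pb Pc); tauto.
  - exact (HY a b c Ya Yb Yc).
Qed.

Definition max_module (x y v : V) : Prop :=
  exists N, partitive E N /\ N x /\ ~ N y /\ N v.

Lemma partitive_max_module x y : partitive E (max_module x y).
Proof.
  intros a b c (Na & HNa & Nax & Nay & Naa) (Nb & HNb & Nbx & Nby & Nbb) Hc.
  assert (Nac : ~ Na c) by (intro; apply Hc; exists Na; auto).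
  assert (Nbc : ~ Nb c) by (intro; apply Hc; exists Nb; auto).
  destruct (HNa a x c Naa Nax Nac), (HNb x b c Nbx Nbb Nbc); tauto.
Qed.

Lemma max_module_greatest x y N v :
  partitive E N -> N x -> ~ N y -> N v -> max_module x y v.
Proof. intros; exists N; auto. Qed.

Lemma max_module_base x y v : max_module x y v -> max_module x y x.
Proof. intros (N & HN & Nx & Ny & _); exists N; auto. Qed.

Lemma max_module_avoids x y : ~ max_module x y y.
Proof. intros (N & _ & _ & Ny & Ny'); exact (Ny Ny'). Qed.

End Modules.

Arguments max_module {V} E x y v.

Section Spanning.

Variables (V : Type) (E : V -> V -> Prop) (e : V * V).
Hypotheses (E_undirected : undirected E) (e_edge : E (fst e) (snd e))
  (e_spans : forall v, spanned E e v).

Lemma partitive_full M a b :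
  partitive E M -> color_class E e (a, b) -> M a -> M b -> forall v, M v.
Proof.
  intros HM Hab Ma Mb v.
  destruct (invariant_at_every_vertex V E E_undirected
              (fun p => M (fst p) /\ M (snd p))) with (e := e) (a := a) (b := b) (v := v)
    as [w [Mv _]]; auto.
  - intros p q; apply partitive_Gamma_closed; assumption.
  - intros c d [Mc Md]; split; assumption.
Qed.

Lemma joined_sets_cover S T a b :
  joined_to_complement E S -> joined_to_complement E T ->
  color_class E e (a, b) -> S a -> T b -> forall v, S v \/ T v.
Proof.
  intros HS HT Hab Sa Tb v.
  destruct (invariant_at_every_vertex V E E_undirected
              (fun p => (S (fst p) /\ T (snd p)) \/ (T (fst p) /\ S (snd p))))
    with (e := e) (a := a) (b := b) (v := v) as [w Hw]; simpl in *; auto.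
  - intros p q; apply joined_cross_Gamma_closed; assumption.
  - intros c d; simpl; tauto.
  - tauto.
Qed.

Lemma crossing_modules_disjoint P Y x y :
  partitive E P -> partitive E Y -> color_class E e (x, y) ->
  P x -> ~ P y -> Y y -> ~ Y x -> ~ exists z, P z /\ Y z.
Proof.
  intros HP HY Hxy Px Py Yy Yx Hmeet.
  destruct E_undirected as [_ E_sym].
  assert (Exy : E x y) by exact (color_class_edge V E E_undirected e x y e_edge Hxy).
  assert (cover : forall v, P v \/ Y v).
  { apply (partitive_full _ x y); auto using partitive_union. }
  assert (out_P_joined : joined_to_complement E (fun v => ~ P v)).
  { intros a b Pa Pb; apply NNPP in Pb.
    assert (Ya : Y a) by (destruct (cover a); tauto).
    destruct (HY a y x Ya Yy Yx) as [Eax _].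
    destruct (HP b x a Pb Px Pa) as [_ Eab].
    apply Eab, Eax, E_sym, Exy. }
  assert (P_minus_Y_joined : joined_to_complement E (fun v => P v /\ ~ Y v)).
  { intros a b [Pa Ya] Hb.
    destruct (classic (P b)) as [Pb | Pb].
    - assert (Yb : Y b) by (apply NNPP; tauto).
      destruct (HY b y a Yb Yy Ya) as [_ Eab].
      destruct (HP a x y Pa Px Py) as [Eay _]; tauto.
    - exact (E_sym b a (out_P_joined b a Pb (fun Pa' => Pa' Pa))). }
  destruct Hmeet as [z [Pz Yz]].
  destruct (joined_sets_cover _ _ x y P_minus_Y_joined out_P_joined Hxy (conj Px Yx) Py z);
    tauto.
Qed.

Lemma max_module_strong x y :
  color_class E e (x, y) -> strong_partitive E (max_module E x y).
Proof.
  intros Hxy; split; [apply partitive_max_module |].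
  intros Y HY [z [Pz Yz]].
  pose proof (max_module_base _ _ x y z Pz) as Px.
  destruct (classic (Y y)) as [Yy | Yy]; [left | right].
  - destruct (classic (Y x)) as [Yx | Yx].
    + intros v _; exact (partitive_full Y x y HY Hxy Yx Yy v).
    + exfalso; apply (crossing_modules_disjoint (max_module E x y) Y x y); eauto.
      * apply partitive_max_module.
      * apply max_module_avoids.
  - intros v Yv.
    apply (max_module_greatest _ _ x y (fun u => max_module E x y u \/ Y u)); auto.
    + apply partitive_union; eauto using partitive_max_module.
    + pose proof (max_module_avoids _ E x y); tauto.
Qed.

Lemma max_module_maximal x y Y :
  color_class E e (x, y) -> partitive E Y -> (exists v, ~ Y v) -> Y x ->
  forall v, Y v -> max_module E x y v.
Proof.
  intros Hxy HY [u Yu] Yx v Yv; apply (max_module_greatest _ _ x y Y v HY Yx); trivial.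
  intro Yy; exact (Yu (partitive_full Y x y HY Hxy Yx Yy u)).
Qed.

End Spanning.

Theorem lemma3p8 (V : Type) (E : V -> V -> Prop) :
  undirected E ->
  (exists x y z : V, x <> y /\ x <> z /\ y <> z) ->
  decomposable E ->
  (exists e : V * V, E (fst e) (snd e) /\ forall x, spanned E e x) ->
  exists X : V -> Prop,
    strong_partitive E X /\
    (exists x y, x <> y /\ X x /\ X y) /\
    (exists v, ~ X v) /\
    (forall Y : V -> Prop, strong_partitive E Y -> (exists v, ~ Y v) ->
       (forall x, X x -> Y x) -> forall x, Y x -> X x).
Proof.
  (* |V| > 2 is implied by decomposability. *)
  intros E_undirected _ [M [HM M_nontrivial]] [e [e_edge e_spans]].
  destruct (nontrivial_set_witnesses V M M_nontrivial)
    as [[x [x' [Hxx' [Mx Mx']]]] [v Mv]].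
  destruct (spanned_color_class V E e x (e_spans x)) as [y Hxy].
  assert (My : ~ M y)
    by (intro My; exact (Mv (partitive_full V E e E_undirected e_spans M x y HM Hxy Mx My v))).
  assert (Px : max_module E x y x) by (exists M; auto).
  exists (max_module E x y); split; [| split; [| split]].
  - exact (max_module_strong V E e E_undirected e_edge e_spans x y Hxy).
  - exists x, x'; repeat split; [exact Hxx' | exact Px | exists M; auto].
  - exists y; apply max_module_avoids.
  - intros Y [HY _] Yproper Hsub.
    exact (max_module_maximal V E e E_undirected e_spans x y Y Hxy HY Yproper (Hsub x Px)).
Qed.
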